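(* Let $V=\operatorname{span}(x_1,\dots,x_7)$, let $R=\operatorname{span}(r_1,\dots,r_7)\subset V\otimes V$, and let $W=\sum_{i,j,l}\varepsilon^{ijl}x_i\otimes x_j\otimes x_l\in V^{\otimes3}$. (1) The linear map $V^*\otimes V^*\to V$, $\lambda\otimes\mu\mapsto\sum_{i,j,l}\varepsilon^{ijl}x_i\lambda(x_j)\mu(x_l)$, determined by $W$ has rank $7$. (2) If $\mathbb{O}_k$ is a division algebra (for example $k=\mathbb{R}$), every nonzero element of $R$ has rank $6$. (3) If $k$ is algebraically closed of characteristic $\ne2$, every nonzero element of $R$ has rank $\ge4$, and rank exactly $4$ occurs.
   Context: Let $k$ be a field of characteristic $\ne 2$. Label the points of the Fano plane by $1,\dots,7$ so that its directed lines are $123,145,167,246,275,374,365$; for $i,j,l$ put $\varepsilon^{ijl}=1$ if $(i,j,l)$ is a cyclic rotation of a directed line, $-1$ if $(j,i,l)$ is, and $0$ otherwise. $r_i=\sum_{m,n}\varepsilon^{imn}x_m\otimes x_n$ are the defining relations of $A_k=T(V)/(R)$. The rank of an element of $V\otimes V$ is its rank as a $7\times7$ matrix of coefficients. $\mathbb{O}_k$ is the octonion algebra with basis $1,o_1,\dots,o_7$ and $o_ro_s=\sum_i\varepsilon^{rsi}o_i-\delta_{rs}$. *)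

From HB Require Import structures.
From mathcomp Require Import all_boot all_order all_algebra.
Set Implicit Arguments. Unset Strict Implicit. Unset Printing Implicit Defensive.
Import Order.TTheory GRing.Theory Num.Theory.
Local Open Scope ring_scope.

(* Points 1..7 of the Fano plane are represented by 0..6 (ordinals 'I_7). *)
(* Directed lines 123,145,167,246,275,374,365, shifted down by one.       *)
Definition fano_lines : seq (nat * nat * nat) :=
  [:: (0,1,2); (0,3,4); (0,5,6); (1,3,5); (1,6,4); (2,6,3); (2,5,4)]%N.

Definition is_rot (i j l : nat) : bool :=
  has (fun t : nat * nat * nat =>
         let '(a, b, c) := t in
         [|| (i, j, l) == (a, b, c), (i, j, l) == (b, c, a) | (i, j, l) == (c, a, b)])
      fano_lines.

Definition eps_int (i j l : nat) : int :=
  if is_rot i j l then 1 else if is_rot j i l then -1 else 0.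

Definition eps (k : fieldType) (i j l : 'I_7) : k := (eps_int i j l)%:~R.

(* Coefficient matrix of r_i = sum_{m,n} eps^{imn} x_m (x) x_n *)
Definition rmx (k : fieldType) (i : 'I_7) : 'M[k]_7 :=
  \matrix_(m < 7, n < 7) eps k i m n.

(* Coefficient matrix of the element sum_i a_i r_i of R = span(r_1..r_7) *)
Definition Relt (k : fieldType) (a : 'rV[k]_7) : 'M[k]_7 :=
  \sum_(i < 7) a 0 i *: rmx k i.

(* Matrix (7 x 49) of the linear map V^* (x) V^* -> V determined by W:
   coordinate i of the image of lambda (x) mu is sum_{j,l} eps^{ijl} lambda_j mu_l,
   i.e. row i is the flattening (mxvec) of the coefficient matrix (eps^{ijl})_{j,l}. *)
Definition Wmap (k : fieldType) : 'M[k]_(7, 7 * 7) :=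
  \matrix_(i < 7) mxvec (rmx k i).

(* Octonions O_k: a0 * 1 + sum_r a_r o_r, represented as (a0, (a_r)_r). *)
Definition oct (k : fieldType) := (k * 'rV[k]_7)%type.

(* o_r o_s = sum_i eps^{rsi} o_i - delta_{rs} *)
Definition octmul (k : fieldType) (x y : oct k) : oct k :=
  (x.1 * y.1 - \sum_(r < 7) x.2 0 r * y.2 0 r,
   \row_(i < 7) (x.1 * y.2 0 i + y.1 * x.2 0 i
                 + \sum_(r < 7) \sum_(s < 7) eps k r s i * x.2 0 r * y.2 0 s)).

Definition oct_division (k : fieldType) : Prop :=
  forall a : oct k, a != (0, 0) ->
    forall b : oct k,
      (exists! x : oct k, octmul a x = b) /\ (exists! y : oct k, octmul y a = b).

From HB Require Import structures.
From mathcomp Require Import all_boot all_order all_algebra.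
From mathcomp Require Import ring zify.
Set Implicit Arguments. Unset Strict Implicit. Unset Printing Implicit Defensive.
Import Order.TTheory GRing.Theory Num.Theory.
Local Open Scope ring_scope.

(* M_a := Relt a is the matrix of the octonion cross product v |-> a x v: it is
   skew-symmetric, a M_a = 0 and M_a^2 = a^T a - (a.a) I, which polarizes to
   M_a M_b + M_b M_a = a^T b + b^T a - 2 (a.b) I.  Hence rank M_a <= 6 when a <> 0,
   and rank M_a >= 6 when a.a <> 0; in a division algebra a.a <> 0 because
   (0, a)^2 = (-a.a, 0).  When a.a = 0, choose b with a.b = 1 and pair the polarized
   identity with a and with the kernel K of M_a: K is orthogonal to a, then totally
   isotropic for the dot product, so dim K <= 3.  Conversely M_a^2 = a^T a has rank 1,
   so rank M_a <= 4 by Sylvester's inequality; a = (1, i, 0, ..., 0) with i^2 = -1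
   realizes rank 4.  Finally W has rank 7 since x_i is the image of x_p (x) x_q for
   any directed line ipq. *)

Definition o0 : 'I_7 := @Ordinal 7 0 isT.
Definition o1 : 'I_7 := @Ordinal 7 1 isT.
Definition o2 : 'I_7 := @Ordinal 7 2 isT.
Definition o3 : 'I_7 := @Ordinal 7 3 isT.
Definition o4 : 'I_7 := @Ordinal 7 4 isT.
Definition o5 : 'I_7 := @Ordinal 7 5 isT.
Definition o6 : 'I_7 := @Ordinal 7 6 isT.

Lemma ord7P (P : 'I_7 -> Prop) :
  P o0 -> P o1 -> P o2 -> P o3 -> P o4 -> P o5 -> P o6 -> forall i, P i.
Proof.
move=> P0 P1 P2 P3 P4 P5 P6 [m lt_m7].
by do 7 (case: m lt_m7 => [|m] lt_m7; first by rewrite (eq_irrelevance lt_m7 isT)).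
Qed.

Lemma sum7 (V : nmodType) (F : 'I_7 -> V) :
  \sum_(i < 7) F i = F o0 + F o1 + F o2 + F o3 + F o4 + F o5 + F o6.
Proof.
rewrite !big_ord_recl big_ord0 addr0 !addrA.
by do !congr (_ + _); congr F; apply/val_inj.
Qed.

Lemma eps_skew (k : fieldType) (i p q : 'I_7) : eps k i q p = - eps k i p q.
Proof.
rewrite /eps -mulrNz; congr (_ *~ _).
by elim/ord7P: i; elim/ord7P: p; elim/ord7P: q.
Qed.

Section DotProduct.

Variables (k : fieldType) (n : nat).
Implicit Types a b c : 'rV[k]_n.

Definition dotr a b : k := \sum_(i < n) a 0 i * b 0 i.

Lemma dotrC a b : dotr a b = dotr b a.
Proof. by apply: eq_bigr => i _; rewrite mulrC. Qed.

Lemma dotrDl a b c : dotr (a + b) c = dotr a c + dotr b c.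
Proof. by rewrite /dotr -big_split; apply: eq_bigr => i _; rewrite mxE mulrDl. Qed.

Lemma dotrDr a b c : dotr a (b + c) = dotr a b + dotr a c.
Proof. by rewrite !(dotrC a) dotrDl. Qed.

Lemma mul_row_tr a b : a *m b^T = (dotr a b)%:M.
Proof. by apply/rowP => i; rewrite ord1 !mxE; apply: eq_bigr => j _; rewrite mxE. Qed.

Lemma exists_dotr_eq1 a : a != 0 -> exists b, dotr a b = 1.
Proof.
case/rV0Pn => i a_i_neq0; exists ((a 0 i)^-1 *: delta_mx 0 i).
rewrite /dotr (bigD1 i) //= big1 ?addr0 => [|j /negbTE j_neq_i].
  by rewrite !mxE !eqxx mulr1 mulfV.
by rewrite !mxE j_neq_i andbF mulr0n !mulr0.
Qed.

Lemma mxrank_isotropic m (N : 'M[k]_(m, n)) :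
  N *m N^T = 0 -> ((\rank N).*2 <= n)%N.
Proof.
move=> isoN; have := mxrank_mul_min N N^T.
by rewrite isoN mxrank0 mxrank_tr leqn0 subn_eq0 addnn.
Qed.

Lemma mxrank_sqr (A : 'M[k]_n) : ((\rank A).*2 <= \rank (A *m A) + n)%N.
Proof. by have := mxrank_mul_min A A; rewrite leq_subLR addnn addnC. Qed.

End DotProduct.

Section CrossProduct.

Variable k : fieldType.
Implicit Types a b : 'rV[k]_7.

Lemma ReltE a p q : Relt a p q = \sum_(i < 7) a 0 i * eps k i p q.
Proof. by rewrite /Relt summxE; apply: eq_bigr => i _; rewrite !mxE. Qed.

Lemma ReltD a b : Relt (a + b) = Relt a + Relt b.
Proof. by rewrite /Relt -big_split; apply: eq_bigr => i _; rewrite mxE scalerDl. Qed.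

Lemma Relt0 : Relt (0 : 'rV[k]_7) = 0.
Proof. by rewrite /Relt big1 // => i _; rewrite mxE scale0r. Qed.

Lemma Relt_neq0 a : Relt a != 0 -> a != 0.
Proof. by apply: contraNneq => ->; rewrite Relt0. Qed.

Lemma tr_Relt a : (Relt a)^T = - Relt a.
Proof.
apply/matrixP => p q; rewrite !mxE !ReltE -sumrN.
by apply: eq_bigr => i _; rewrite eps_skew mulrN.
Qed.

Lemma mulmx_Relt a : a *m Relt a = 0.
Proof.
by apply/rowP; elim/ord7P; rewrite !mxE sum7 !ReltE !sum7 /eps /eps_int /is_rot /=; ring.
Qed.

Lemma Relt_mulmx a : Relt a *m a^T = 0.
Proof. by apply: trmx_inj; rewrite trmx_mul tr_Relt trmxK mulmxN mulmx_Relt oppr0 trmx0. Qed.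

Lemma Relt_sqr a : Relt a *m Relt a = a^T *m a - dotr a a *: 1%:M.
Proof.
apply/matrixP; elim/ord7P; elim/ord7P;
by rewrite !mxE sum7 big_ord1 !mxE !ReltE /dotr !sum7 ?mxE /eps /eps_int /is_rot /=; ring.
Qed.

Lemma Relt_anticomm a b :
  Relt a *m Relt b + Relt b *m Relt a = a^T *m b + b^T *m a - (dotr a b *+ 2) *: 1%:M.
Proof.
(* Polarize: subtract the instances of Relt_sqr at a and b from the one at a + b. *)
have := Relt_sqr (a + b).
rewrite ReltD mulmxDl !mulmxDr !Relt_sqr dotrDl !dotrDr (dotrC b a) linearD /=.
rewrite !mulmxDl => /matrixP E; apply/matrixP => i j.
move/eqP: (E i j); rewrite -subr_eq0 => /eqP E0.
apply/eqP; rewrite -subr_eq0 -[X in _ == X]E0 !mxE; apply/eqP; ring.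
Qed.

End CrossProduct.

Section RankBounds.

Variable k : fieldType.
Implicit Types a : 'rV[k]_7.

Lemma rank_Relt_le6 a : a != 0 -> (\rank (Relt a) <= 6)%N.
Proof.
move=> a_neq0; rewrite leqNgt; apply: contra a_neq0 => rank7.
have : row_free (Relt a) by rewrite /row_free eqn_leq rank_leq_row rank7.
by rewrite row_free_unit => /mulmxK cancelM; rewrite -(cancelM _ a) mulmx_Relt mul0mx.
Qed.

Lemma rank_Relt_ge6 a : dotr a a != 0 -> (6 <= \rank (Relt a))%N.
Proof.
move=> aa_neq0.
have aa_E : dotr a a *: 1%:M = a^T *m a - Relt a *m Relt a.
  by rewrite Relt_sqr opprB addrC subrK.
have rank_aa : (\rank (a^T *m a) <= 1)%N := leq_trans (mxrankM_maxl _ _) (rank_leq_col _).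
have : (7 <= \rank (a^T *m a) + \rank (Relt a *m Relt a))%N.
  rewrite -{1}(mxrank1 k 7) -(mxrank_scale_nz _ aa_neq0) aa_E.
  by rewrite (leq_trans (mxrank_add _ _)) // mxrank_opp.
have := mxrankM_maxl (Relt a) (Relt a); lia.
Qed.

Lemma Relt_kernel_isotropic m (N : 'M[k]_(m, 7)) a :
  (2%:R : k) != 0 -> a != 0 -> dotr a a = 0 -> N *m Relt a = 0 -> N *m N^T = 0.
Proof.
move=> two_neq0 a_neq0 aa0 NM; have [b ab1] := exists_dotr_eq1 a_neq0.
have MN : Relt a *m N^T = 0.
  by apply: trmx_inj; rewrite trmx_mul trmxK tr_Relt mulmxN NM oppr0 trmx0.
have key : N *m Relt b *m Relt a = N *m a^T *m b + N *m b^T *m a - 2%:R *: N.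
  have := congr1 (mulmx N) (Relt_anticomm a b).
  rewrite mulmxDr !mulmxA NM mul0mx add0r ab1 => ->.
  by rewrite mulmxBr mulmxDr !mulmxA scalemx1 mul_mx_scalar.
have Na : N *m a^T = 0.
  have := congr1 (mulmx^~ a^T) key.
  rewrite -mulmxA Relt_mulmx mulmx0 mulmxBl mulmxDl -!mulmxA !mul_row_tr.
  rewrite (dotrC b a) ab1 aa0 !mul_mx_scalar scale1r scale0r mulmx0 addr0 -scalemxAl.
  by rewrite scaler_nat mulr2n opprD addrA subrr sub0r => /esym/eqP; rewrite oppr_eq0 => /eqP.
have aN : a *m N^T = 0 by rewrite -[a]trmxK -trmx_mul Na trmx0.
have := congr1 (mulmx^~ N^T) key.
rewrite -mulmxA MN mulmx0 mulmxBl mulmxDl -!mulmxA aN !mulmx0 mulmxA Na mul0mx addr0 sub0r.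
by rewrite -scalemxAl => /esym/eqP; rewrite oppr_eq0 scaler_eq0 (negbTE two_neq0) => /eqP.
Qed.

Lemma rank_Relt_ge4 a : (2%:R : k) != 0 -> a != 0 -> (4 <= \rank (Relt a))%N.
Proof.
move=> two_neq0 a_neq0; have [aa0 | aa_neq0] := eqVneq (dotr a a) 0; last first.
  exact: leq_trans (rank_Relt_ge6 aa_neq0).
have := mxrank_isotropic (Relt_kernel_isotropic two_neq0 a_neq0 aa0 (mulmx_ker _)).
rewrite mxrank_ker; have := rank_leq_row (Relt a); lia.
Qed.

Lemma rank_Relt_le4 a : dotr a a = 0 -> (\rank (Relt a) <= 4)%N.
Proof.
move=> aa0; have := mxrank_sqr (Relt a); rewrite Relt_sqr aa0 scale0r subr0.
have := leq_trans (mxrankM_maxl a^T a) (rank_leq_col a^T); lia.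
Qed.

End RankBounds.

Lemma cross_self (k : fieldType) (a : 'rV[k]_7) i :
  \sum_(r < 7) \sum_(s < 7) eps k r s i * a 0 r * a 0 s = 0.
Proof.
have /rowP/(_ i) := mulmx_Relt a; rewrite !mxE => cross_ai; rewrite -[RHS]cross_ai.
rewrite exchange_big; apply: eq_bigr => s _; rewrite ReltE mulr_sumr.
by apply: eq_bigr => r _; ring.
Qed.

Lemma oct_division_dotr_neq0 (k : fieldType) (a : 'rV[k]_7) :
  oct_division k -> a != 0 -> dotr a a != 0.
Proof.
move=> oct_div a_neq0; apply/eqP => aa0.
have a_oct_neq0 : ((0 : k), a) != (0, 0) by rewrite xpair_eqE negb_and a_neq0 orbT.
have [[x [_ uniq_sol]] _] := oct_div _ a_oct_neq0 (octmul (0, a) (0, 0)).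
have sqr_a : octmul (0, a) (0, a) = octmul (0, a) (0, 0).
  rewrite /octmul /=; congr pair.
    by rewrite -[\sum_(r < 7) _]/(dotr a a) aa0 big1 // => r _; rewrite mxE mulr0.
  apply/rowP => i; rewrite !mxE cross_self !mulr0 !mul0r !add0r.
  by rewrite big1 // => r _; rewrite big1 // => s _; rewrite mxE mulr0.
have := uniq_sol _ sqr_a; rewrite (uniq_sol (0, 0)) // => /(congr1 snd) /= a0.
by rewrite -a0 eqxx in a_neq0.
Qed.

Lemma Wmap_rank (k : fieldType) : \rank (Wmap k) = 7%N.
Proof.
(* The column of x_p (x) x_q, for a directed line through i, p, q, is the i-th unit vector. *)
pose p j := nth o0 [:: o1; o2; o0; o4; o0; o6; o0] j.
pose q j := nth o0 [:: o2; o0; o1; o0; o3; o0; o5] j.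
have W1 : colsub (fun j => mxvec_index (p j) (q j)) (Wmap k) = 1%:M.
  apply/matrixP => i j; rewrite !mxE mxvecE mxE.
  by elim/ord7P: i; elim/ord7P: j; rewrite /eps /eps_int /is_rot.
apply/eqP; rewrite eqn_leq rank_leq_row -{1}(mxrank1 k 7) -W1.
by rewrite -{1}[Wmap k]mulmx1 -mulmx_colsub mxrankM_maxl.
Qed.

Lemma exists_Relt_rank4 (k : closedFieldType) :
  (2%:R : k) != 0 -> exists a : 'rV[k]_7, Relt a != 0 /\ \rank (Relt a) = 4%N.
Proof.
move=> two_neq0; have [i i2] := imaginary_exists k.
pose a : 'rV[k]_7 := \row_j nth 0 [:: 1; i; 0; 0; 0; 0; 0] j.
have a_neq0 : a != 0 by apply/rV0Pn; exists o0; rewrite mxE oner_neq0.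
have aa0 : dotr a a = 0 by rewrite /dotr sum7 !mxE /= -[i * i]expr2 i2; ring.
have rank_ge4 := rank_Relt_ge4 two_neq0 a_neq0.
exists a; split; last by apply/eqP; rewrite eqn_leq rank_Relt_le4.
by apply: contraTneq rank_ge4 => ->; rewrite mxrank0.
Qed.

Theorem lemma11p1 :
  (forall k : fieldType, (2%:R : k) != 0 -> \rank (Wmap k) = 7%N) /\
  (forall k : fieldType, (2%:R : k) != 0 -> oct_division k ->
     forall a : 'rV[k]_7, Relt a != 0 -> \rank (Relt a) = 6%N) /\
  (forall k : closedFieldType, (2%:R : k) != 0 ->
     (forall a : 'rV[k]_7, Relt a != 0 -> (4 <= \rank (Relt a))%N) /\
     (exists a : 'rV[k]_7, Relt a != 0 /\ \rank (Relt a) = 4%N)).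
Proof.
split; first by move=> k _; exact: Wmap_rank.
split.
  move=> k _ oct_div a /Relt_neq0 a_neq0; apply/eqP.
  by rewrite eqn_leq rank_Relt_le6 // rank_Relt_ge6 // oct_division_dotr_neq0.
move=> k two_neq0; split; last exact: exists_Relt_rank4.
by move=> a /Relt_neq0; exact: rank_Relt_ge4.
Qed.
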